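(* Suppose $0<a<b$, $c>1$ and $0<\alpha<\alpha_c$. For all real $k\ne0$, with $\xi=k+i\alpha$: (1) $k\,\operatorname{Im}\hat S(\xi)<0$; (2) $\sqrt{a/b}<|\hat S(\xi)|<\hat S(i\alpha)=\sqrt{\frac{1-a\alpha^2}{1-b\alpha^2}}<c$; (3) $|\hat S(\xi)|<1-\frac12\frac{(b-a)(k^2-\alpha^2)}{1+b(k^2-\alpha^2)}$; (4) $i\xi\hat S(\xi)=-\sqrt{-\xi^2\frac{1+a\xi^2}{1+b\xi^2}}$ (principal square root).
   Context: $\alpha_c=\sqrt{(c^2-1)/(bc^2-a)}$. $\hat S(\xi)=\sqrt{\frac{1+a\xi^2}{1+b\xi^2}}$ is the principal-branch square root, which is analytic on the strip $0\le\operatorname{Im}\xi\le\alpha$ when $\alpha<b^{-1/2}$ (there the ratio $\frac{1+a\xi^2}{1+b\xi^2}=\frac ab+(1-\frac ab)\frac1{1+b\xi^2}$ has positive real part). *)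

From Stdlib Require Import Reals Lra.
Open Scope R_scope.

Definition Cx : Type := (R * R)%type.
Definition Re (z : Cx) : R := fst z.
Definition Im (z : Cx) : R := snd z.
Definition RtoC (x : R) : Cx := (x, 0).
Definition Ci : Cx := (0, 1).
Definition Cadd (z w : Cx) : Cx := (Re z + Re w, Im z + Im w).
Definition Copp (z : Cx) : Cx := (- Re z, - Im z).
Definition Cmul (z w : Cx) : Cx :=
  (Re z * Re w - Im z * Im w, Re z * Im w + Im z * Re w).
Definition Cnorm (z : Cx) : R := sqrt (Re z * Re z + Im z * Im z).
Definition Cinv (z : Cx) : Cx :=
  let d := Re z * Re z + Im z * Im z in (Re z / d, - Im z / d).
Definition Cdiv (z w : Cx) : Cx := Cmul z (Cinv w).

(* Principal branch of the complex square root (argument in (-pi/2, pi/2],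
   branch cut on the negative real axis, where sqrt(x) = i sqrt(-x)). *)
Definition Csqrt (z : Cx) : Cx :=
  (sqrt ((Cnorm z + Re z) / 2),
   (if Rlt_dec (Im z) 0 then -1 else 1) * sqrt ((Cnorm z - Re z) / 2)).

Definition Shat (a b : R) (xi : Cx) : Cx :=
  Csqrt (Cdiv (Cadd (RtoC 1) (Cmul (RtoC a) (Cmul xi xi)))
              (Cadd (RtoC 1) (Cmul (RtoC b) (Cmul xi xi)))).

Definition alpha_c (a b c : R) : R := sqrt ((c ^ 2 - 1) / (b * c ^ 2 - a)).

From Stdlib Require Import Reals Lra.
Open Scope R_scope.

(* Write e = a/b in (0,1), u = 1 + b (k^2 - alpha^2) and v = 2 b k alpha, so
   that 1 + b xi^2 = u + i v and the ratio is r = e + (1 - e)/(u + i v)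
   (the function [mobius] below).  Everything follows from elementary facts
   about r:
   - Re r > e and v Im r < 0, which give the lower bound in (2) and the sign
     in (1), because the principal root keeps the sign of the imaginary part;
   - |r| < e + (1 - e)/w whenever 0 < w <= u, applied with w = 1 - b alpha^2
     (the value at k = 0) for (2) and with w = u for (3), the latter combined
     with sqrt x <= (1 + x)/2;
   - (k^2 - alpha^2)|r| < (k^2 + alpha^2) Re r, a bound on the argument of r
     which says exactly that w = -i xi sqrt r has positive real part; hence
     sqrt(-xi^2 r) = sqrt(w^2) = w, which is (4). *)

Lemma sqrt_lt_of_lt_sq (x y : R) : 0 <= x -> 0 <= y -> x < y * y -> sqrt x < y.
Proof. intros hx hy h. rewrite <- (sqrt_square y) by lra. apply sqrt_lt_1; nra. Qed.

Lemma sqrt_le_half_succ (x : R) : 0 <= x -> sqrt x <= (1 + x) / 2.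
Proof.
  intro hx. pose proof (sqrt_sqrt x hx). pose proof (Rle_0_sqr (sqrt x - 1)).
  unfold Rsqr in *. nra.
Qed.

Lemma div_lt_div (x y D w : R) : 0 < D -> 0 < w -> x * w < y * D -> x / D < y / w.
Proof.
  intros hD hw h. apply (Rmult_lt_reg_r (D * w)); [nra |].
  replace (x / D * (D * w)) with (x * w) by (field; lra).
  replace (y / w * (D * w)) with (y * D) by (field; lra). lra.
Qed.

Definition sgn (y : R) : R := if Rlt_dec y 0 then -1 else 1.

Lemma sgn_sq (y : R) : sgn y * sgn y = 1.
Proof. unfold sgn; destruct (Rlt_dec y 0); ring. Qed.

Lemma Csqrt_eq (z : Cx) :
  Csqrt z = (sqrt ((Cnorm z + Re z) / 2), sgn (Im z) * sqrt ((Cnorm z - Re z) / 2)).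
Proof. reflexivity. Qed.

Lemma Cnorm_sq (z : Cx) : Cnorm z * Cnorm z = Re z * Re z + Im z * Im z.
Proof. apply sqrt_sqrt; nra. Qed.

Lemma Cnorm_nonneg (z : Cx) : 0 <= Cnorm z.
Proof. apply sqrt_pos. Qed.

Lemma Rabs_Re_le_Cnorm (z : Cx) : Rabs (Re z) <= Cnorm z.
Proof. rewrite <- sqrt_Rsqr_abs. apply sqrt_le_1_alt. unfold Rsqr. nra. Qed.

Lemma Re_le_Cnorm (z : Cx) : Re z <= Cnorm z.
Proof. pose proof (Rle_abs (Re z)). pose proof (Rabs_Re_le_Cnorm z). lra. Qed.

Lemma Re_lt_Cnorm (z : Cx) : Im z <> 0 -> Re z < Cnorm z.
Proof.
  intro hI. pose proof (Cnorm_sq z). pose proof (Re_le_Cnorm z). pose proof (Cnorm_nonneg z).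
  assert (0 < Im z * Im z) by (apply Rsqr_pos_lt; exact hI).
  nra.
Qed.

Lemma Csqrt_parts_sq (z : Cx) :
  Re (Csqrt z) * Re (Csqrt z) = (Cnorm z + Re z) / 2 /\
  Im (Csqrt z) * Im (Csqrt z) = (Cnorm z - Re z) / 2.
Proof.
  pose proof (Rabs_Re_le_Cnorm z). pose proof (Rle_abs (Re z)).
  pose proof (Rle_abs (- Re z)). rewrite Rabs_Ropp in *.
  rewrite Csqrt_eq; simpl. split.
  - apply sqrt_sqrt; lra.
  - replace (sgn (Im z) * sqrt ((Cnorm z - Re z) / 2) * (sgn (Im z) * sqrt ((Cnorm z - Re z) / 2)))
      with (sgn (Im z) * sgn (Im z) * (sqrt ((Cnorm z - Re z) / 2) * sqrt ((Cnorm z - Re z) / 2)))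
      by ring.
    rewrite sgn_sq, sqrt_sqrt; lra.
Qed.

(* The sign factor makes the cross term of (sqrt z)^2 equal to Im z. *)
Lemma Csqrt_cross (z : Cx) : 2 * (Re (Csqrt z) * Im (Csqrt z)) = Im z.
Proof.
  pose proof (Rabs_Re_le_Cnorm z). pose proof (Rle_abs (Re z)).
  pose proof (Rle_abs (- Re z)). rewrite Rabs_Ropp in *.
  pose proof (Cnorm_sq z).
  rewrite Csqrt_eq; simpl.
  set (n := Cnorm z) in *. set (x := Re z) in *. set (y := Im z) in *.
  replace (sqrt ((n + x) / 2) * (sgn y * sqrt ((n - x) / 2)))
    with (sgn y * sqrt ((n + x) / 2 * ((n - x) / 2))) by (rewrite sqrt_mult by lra; ring).
  replace ((n + x) / 2 * ((n - x) / 2)) with (Rsqr (y / 2)) by (unfold Rsqr; nra).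
  rewrite sqrt_Rsqr_abs. unfold sgn. destruct (Rlt_dec y 0).
  - rewrite Rabs_left by lra. lra.
  - rewrite Rabs_right by lra. lra.
Qed.

Lemma Csqrt_sq (z : Cx) : Cmul (Csqrt z) (Csqrt z) = z.
Proof.
  destruct (Csqrt_parts_sq z) as [hX hY]. pose proof (Csqrt_cross z).
  destruct z as [x y]. unfold Cmul. rewrite hX, hY. simpl in *. f_equal; lra.
Qed.

Lemma Cnorm_Csqrt (z : Cx) : Cnorm (Csqrt z) = sqrt (Cnorm z).
Proof.
  destruct (Csqrt_parts_sq z) as [hX hY].
  unfold Cnorm at 1. rewrite hX, hY. f_equal. field.
Qed.

Lemma Re_Csqrt_nonneg (z : Cx) : 0 <= Re (Csqrt z).
Proof. rewrite Csqrt_eq. apply sqrt_pos. Qed.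

Lemma Csqrt_of_sq (w : Cx) : 0 < Re w -> Csqrt (Cmul w w) = w.
Proof.
  destruct w as [x y]. unfold Re; simpl. intro hx.
  unfold Csqrt, Cmul, Cnorm, Re, Im; simpl.
  replace ((x * x - y * y) * (x * x - y * y) + (x * y + y * x) * (x * y + y * x))
    with (Rsqr (x * x + y * y)) by (unfold Rsqr; ring).
  rewrite sqrt_Rsqr by nra.
  replace ((x * x + y * y + (x * x - y * y)) / 2) with (Rsqr x) by (unfold Rsqr; field).
  replace ((x * x + y * y - (x * x - y * y)) / 2) with (Rsqr y) by (unfold Rsqr; field).
  rewrite sqrt_Rsqr by lra. rewrite sqrt_Rsqr_abs. f_equal.
  destruct (Rlt_dec (x * y + y * x) 0).
  - rewrite Rabs_left by nra. ring.
  - rewrite Rabs_right by nra. ring.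
Qed.

Lemma Csqrt_nonneg_real (x : R) : 0 <= x -> Csqrt (x, 0) = RtoC (sqrt x).
Proof.
  intro hx. unfold Csqrt, Cnorm, RtoC, Re, Im; simpl.
  replace (x * x + 0 * 0) with (Rsqr x) by (unfold Rsqr; ring).
  rewrite sqrt_Rsqr by lra.
  replace ((x + x) / 2) with x by field. replace ((x - x) / 2) with 0 by field.
  rewrite sqrt_0. f_equal. ring.
Qed.

Lemma Im_Csqrt_same_side (z : Cx) (k : R) : k * Im z < 0 -> k * Im (Csqrt z) < 0.
Proof.
  intro hk. assert (hI : Im z <> 0) by (intro h; rewrite h in hk; lra).
  pose proof (Re_lt_Cnorm z hI) as hlt.
  rewrite Csqrt_eq; simpl.
  assert (hQ : 0 < sqrt ((Cnorm z - Re z) / 2)) by (apply sqrt_lt_R0; lra).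
  unfold sgn. destruct (Rlt_dec (Im z) 0); nra.
Qed.

Lemma Cnorm_Csqrt_lt_mean (z : Cx) (x : R) : Cnorm z < x -> Cnorm (Csqrt z) < (1 + x) / 2.
Proof.
  intro hz. rewrite Cnorm_Csqrt.
  pose proof (sqrt_le_half_succ (Cnorm z) (Cnorm_nonneg z)). lra.
Qed.

(* The rotation of sqrt z by -i xi = alpha - i k stays in the right half-plane
   as long as the argument of z is small compared to the angle of xi. *)
Lemma Re_rot_Csqrt_pos (z : Cx) (k al : R) :
  0 < al -> k * Im (Csqrt z) <= 0 ->
  (k ^ 2 - al ^ 2) * Cnorm z < (k ^ 2 + al ^ 2) * Re z ->
  0 < Re (Cmul (al, - k) (Csqrt z)).
Proof.
  intros hal hkY hkey. destruct (Csqrt_parts_sq z) as [hX hY].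
  pose proof (Re_Csqrt_nonneg z) as hX0.
  change (0 < al * Re (Csqrt z) - - k * Im (Csqrt z)).
  set (X := Re (Csqrt z)) in *. set (Y := Im (Csqrt z)) in *.
  assert (hsq : (k * Y) * (k * Y) < (al * X) * (al * X)) by nra.
  assert (0 <= al * X) by nra.
  destruct (Rle_lt_dec (al * X - - k * Y) 0) as [hle |]; [| lra].
  assert (al * X * (al * X) <= (k * Y) * (k * Y)) by nra.
  lra.
Qed.

Lemma Csqrt_mul_sq (w z : Cx) :
  0 < Re (Cmul w (Csqrt z)) -> Csqrt (Cmul (Cmul w w) z) = Cmul w (Csqrt z).
Proof.
  intro hpos. rewrite <- (Csqrt_of_sq _ hpos). f_equal.
  rewrite <- (Csqrt_sq z) at 1. set (s := Csqrt z).
  destruct w as [p q], s as [x y]. unfold Cmul, Re, Im; simpl. f_equal; ring.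
Qed.

(* With xi = k + i alpha: since (-i xi)^2 = -xi^2, the identity
   i xi sqrt z = - sqrt (-xi^2 z) holds when -i xi sqrt z has positive real part. *)
Lemma rotated_branch (k al : R) (z : Cx) :
  0 < Re (Cmul (al, - k) (Csqrt z)) ->
  Cmul (Cmul Ci (k, al)) (Csqrt z) = Copp (Csqrt (Cmul (Copp (Cmul (k, al) (k, al))) z)).
Proof.
  intro hpos.
  replace (Copp (Cmul (k, al) (k, al))) with (Cmul (al, - k) (al, - k))
    by (unfold Copp, Cmul, Re, Im; simpl; f_equal; ring).
  rewrite (Csqrt_mul_sq _ _ hpos).
  destruct (Csqrt z) as [x y]. unfold Copp, Cmul, Ci, Re, Im; simpl. f_equal; ring.
Qed.

(* The Moebius function e + (1 - e)/(u + i v), written out in components. *)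
Definition mobius (e u v : R) : Cx :=
  (e + (1 - e) * u / (u * u + v * v), - ((1 - e) * v) / (u * u + v * v)).

Lemma mobius_real (e m : R) : m <> 0 -> mobius e m 0 = (e + (1 - e) / m, 0).
Proof. intro hm. unfold mobius. f_equal; field; lra. Qed.

Lemma mobius_Re_gt (e u v : R) : e < 1 -> 0 < u -> e < Re (mobius e u v).
Proof.
  intros he hu. unfold mobius, Re; simpl.
  assert (0 < (1 - e) * u / (u * u + v * v)) by (apply Rdiv_lt_0_compat; nra).
  lra.
Qed.

Lemma mobius_Im_sign (e u v : R) : e < 1 -> v <> 0 -> v * Im (mobius e u v) < 0.
Proof.
  intros he hv. unfold mobius, Im; simpl.
  assert (hv2 : 0 < v * v) by (apply Rsqr_pos_lt; exact hv).
  replace (v * (- ((1 - e) * v) / (u * u + v * v)))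
    with (- ((1 - e) * (v * v) / (u * u + v * v))) by (field; nra).
  assert (0 < (1 - e) * (v * v) / (u * u + v * v)) by (apply Rdiv_lt_0_compat; nra).
  lra.
Qed.

Lemma mobius_norm_lt (e u v w : R) :
  0 < e < 1 -> 0 < w <= u -> v <> 0 -> Cnorm (mobius e u v) < e + (1 - e) / w.
Proof.
  intros he hw hv.
  assert (hv2 : 0 < v * v) by (apply Rsqr_pos_lt; exact hv).
  set (D := u * u + v * v).
  assert (hD : u * u < D) by (unfold D; lra).
  assert (hsq : Re (mobius e u v) * Re (mobius e u v) + Im (mobius e u v) * Im (mobius e u v)
                = e * e + (1 - e) * ((2 * e * u + (1 - e)) / D)).
  { unfold mobius, Re, Im, D; simpl. field. unfold D in hD. nra. }
  assert (htgt : (e + (1 - e) / w) * (e + (1 - e) / w)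
                 = e * e + (1 - e) * ((2 * e * w + (1 - e)) / (w * w))) by (field; lra).
  assert (hfrac : (2 * e * u + (1 - e)) / D < (2 * e * w + (1 - e)) / (w * w)).
  { assert (hc : 0 < 2 * e * w + (1 - e)) by nra.
    apply div_lt_div; [nra | nra |].
    assert (hew : 0 <= 2 * e * w * u) by (repeat apply Rmult_le_pos; lra).
    assert (huw : 0 <= u * u - w * w) by nra.
    assert (0 <= 2 * e * w * u * (u - w) + (1 - e) * (u * u - w * w)) by
      (apply Rplus_le_le_0_compat; apply Rmult_le_pos; lra).
    nra. }
  apply sqrt_lt_of_lt_sq; [nra | | nra].
  assert (0 < (1 - e) / w) by (apply Rdiv_lt_0_compat; lra). lra.
Qed.

Lemma mobius_arg_bound (e b s t h : R) :
  0 < e < 1 -> 0 < b -> t <> 0 -> 0 < 1 + b * s -> 0 < h -> h * h = s * s + t * t ->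
  s * Cnorm (mobius e (1 + b * s) (b * t)) < h * Re (mobius e (1 + b * s) (b * t)).
Proof.
  intros he hb ht hu hh hh2.
  set (u := 1 + b * s) in *. set (v := b * t).
  pose proof (mobius_Re_gt e u v ltac:(lra) hu) as hRe.
  pose proof (Cnorm_sq (mobius e u v)) as hn2.
  pose proof (Cnorm_nonneg (mobius e u v)) as hn0.
  set (n := Cnorm (mobius e u v)) in *.
  set (X := Re (mobius e u v)) in *. set (Y := Im (mobius e u v)) in *.
  set (D := u * u + v * v).
  assert (hD : 0 < D) by (unfold D; nra).
  assert (hXD : X * D = e * D + (1 - e) * u)
    by (unfold X, D, mobius, Re; simpl; field; unfold D in hD; lra).
  assert (hYD : Y * D = - ((1 - e) * v))
    by (unfold Y, D, mobius, Im; simpl; field; unfold D in hD; lra).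
  assert (hhX : 0 < h * X) by nra.
  destruct (Rle_lt_dec s 0) as [hs | hs]; [nra |].
  assert (hlow : 0 < (1 - e) * (b * s) < X * D)
    by (split; [apply Rmult_lt_0_compat; nra | rewrite hXD; unfold u; nra]).
  assert (hYX : s * s * (Y * Y) < t * t * (X * X)).
  { assert (hbD : 0 < (b * D) * (b * D))
      by (apply Rmult_lt_0_compat; apply Rmult_lt_0_compat; lra).
    apply (Rmult_lt_reg_r ((b * D) * (b * D))); [exact hbD |].
    replace (s * s * (Y * Y) * (b * D * (b * D)))
      with (t * t * (b * b) * (((1 - e) * (b * s)) * ((1 - e) * (b * s)))).
    2:{ transitivity (s * s * (b * b) * ((Y * D) * (Y * D))); [| ring].
        rewrite hYD; unfold v; ring. }
    replace (t * t * (X * X) * (b * D * (b * D)))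
      with (t * t * (b * b) * ((X * D) * (X * D))) by ring.
    assert (0 < t * t * (b * b))
      by (apply Rmult_lt_0_compat; [apply Rsqr_pos_lt; exact ht | nra]).
    apply Rmult_lt_compat_l; [lra | nra]. }
  assert (hsq : (s * n) * (s * n) < (h * X) * (h * X)).
  { replace ((s * n) * (s * n)) with (s * s * (n * n)) by ring.
    replace ((h * X) * (h * X)) with ((h * h) * (X * X)) by ring.
    rewrite hn2, hh2. nra. }
  nra.
Qed.

(* The ratio (1 + a xi^2)/(1 + b xi^2) at xi = k + i alpha, i.e. e + (1 - e)/(u + i v)
   with e = a/b and 1 + b xi^2 = u + i v. *)
Definition ratio (a b k al : R) : Cx :=
  mobius (a / b) (1 + b * (k ^ 2 - al ^ 2)) (b * (2 * k * al)).

Lemma ratio_eq (a b k al : R) :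
  0 < b -> b * al ^ 2 < 1 ->
  Cdiv (Cadd (RtoC 1) (Cmul (RtoC a) (Cmul (k, al) (k, al))))
       (Cadd (RtoC 1) (Cmul (RtoC b) (Cmul (k, al) (k, al)))) = ratio a b k al.
Proof.
  intros hb hal.
  assert (hu : 0 < 1 + b * (k ^ 2 - al ^ 2)) by (pose proof (pow2_ge_0 k); nra).
  unfold ratio. set (u := 1 + b * (k ^ 2 - al ^ 2)) in *. set (v := b * (2 * k * al)).
  assert (hD : u * u + v * v <> 0) by nra.
  replace (Cadd (RtoC 1) (Cmul (RtoC b) (Cmul (k, al) (k, al)))) with (u, v)
    by (unfold u, v, Cadd, Cmul, RtoC, Re, Im; simpl; f_equal; ring).
  unfold mobius, Cdiv, Cadd, Cmul, Cinv, RtoC, Re, Im; simpl.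
  f_equal; unfold u, v in *; field; split; lra.
Qed.

Lemma Shat_eq_ratio (a b k al : R) :
  0 < b -> b * al ^ 2 < 1 -> Shat a b (k, al) = Csqrt (ratio a b k al).
Proof. intros hb hal. unfold Shat. rewrite ratio_eq by assumption. reflexivity. Qed.

Lemma Shat_imag_axis (a b al : R) :
  0 < b -> b * al ^ 2 < 1 -> a < b ->
  Shat a b (0, al) = RtoC (sqrt ((1 - a * al ^ 2) / (1 - b * al ^ 2))).
Proof.
  intros hb hal hab.
  rewrite Shat_eq_ratio by assumption. unfold ratio.
  replace (b * (2 * 0 * al)) with 0 by ring.
  rewrite mobius_real by nra.
  replace (a / b + (1 - a / b) / (1 + b * (0 ^ 2 - al ^ 2)))
    with ((1 - a * al ^ 2) / (1 - b * al ^ 2)) by (field; lra).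
  apply Csqrt_nonneg_real. apply Rlt_le, Rdiv_lt_0_compat; nra.
Qed.

Lemma ratio_bounds (a b k al : R) :
  0 < a -> a < b -> 0 < al -> b * al ^ 2 < 1 -> k <> 0 ->
  let r := ratio a b k al in
  a / b < Re r /\ k * Im r < 0 /\
  Cnorm r < (1 - a * al ^ 2) / (1 - b * al ^ 2) /\
  Cnorm r < a / b + (1 - a / b) / (1 + b * (k ^ 2 - al ^ 2)) /\
  (k ^ 2 - al ^ 2) * Cnorm r < (k ^ 2 + al ^ 2) * Re r.
Proof.
  intros ha hab hal hbal hk r. unfold r, ratio.
  assert (hk2 : 0 < k ^ 2) by (rewrite <- Rsqr_pow2; apply Rsqr_pos_lt; exact hk).
  assert (hR0 : (1 - a * al ^ 2) / (1 - b * al ^ 2) = a / b + (1 - a / b) / (1 - b * al ^ 2))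
    by (field; lra).
  rewrite hR0.
  set (e := a / b). set (m := 1 - b * al ^ 2).
  set (u := 1 + b * (k ^ 2 - al ^ 2)). set (v := b * (2 * k * al)).
  assert (he : 0 < e < 1) by (assert (e * b = a) by (unfold e; field; lra); split; nra).
  assert (hm : 0 < m) by (unfold m; lra).
  assert (hmu : m < u) by (unfold m, u; nra).
  assert (hkv : 0 < k * v).
  { unfold v. replace (k * (b * (2 * k * al))) with (2 * b * al * k ^ 2) by ring.
    apply Rmult_lt_0_compat; [nra | exact hk2]. }
  assert (hv : v <> 0) by (intro h; rewrite h in hkv; lra).
  repeat split.
  - apply mobius_Re_gt; lra.
  - pose proof (mobius_Im_sign e u v ltac:(lra) hv). nra.
  - apply mobius_norm_lt; lra.
  - apply mobius_norm_lt; lra.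
  - apply mobius_arg_bound; try lra; nra.
Qed.

(* The condition alpha < alpha_c: below the branch point of S, and S(i alpha) < c. *)
Lemma alpha_c_bound (a b c al : R) :
  0 < a -> a < b -> 1 < c -> 0 < al -> al < alpha_c a b c ->
  b * al ^ 2 < 1 /\ (1 - a * al ^ 2) / (1 - b * al ^ 2) < c * c.
Proof.
  intros ha hab hc hal halc. unfold alpha_c in halc.
  assert (hc2 : 1 < c ^ 2) by nra.
  assert (hden : 0 < b * c ^ 2 - a) by nra.
  set (X := (c ^ 2 - 1) / (b * c ^ 2 - a)) in halc.
  assert (hX : X * (b * c ^ 2 - a) = c ^ 2 - 1) by (unfold X; field; lra).
  assert (hal2 : al * al < X).
  { pose proof (sqrt_pos X). assert (0 <= X) by nra.
    rewrite <- (sqrt_sqrt X) by lra. nra. }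
  assert (hbound : al ^ 2 * (b * c ^ 2 - a) < c ^ 2 - 1) by nra.
  assert (hbal : b * al ^ 2 < 1) by nra.
  split; [exact hbal |].
  assert (hq : (1 - a * al ^ 2) / (1 - b * al ^ 2) * (1 - b * al ^ 2) = 1 - a * al ^ 2)
    by (field; lra).
  nra.
Qed.

Theorem lemma3p1 (a b c alpha : R)
  (ha : 0 < a) (hab : a < b) (hc : 1 < c)
  (hal0 : 0 < alpha) (halc : alpha < alpha_c a b c) :
  forall k : R, k <> 0 ->
  let xi : Cx := (k, alpha) in
  (* (1) *)
  k * Im (Shat a b xi) < 0 /\
  (* (2) *)
  (sqrt (a / b) < Cnorm (Shat a b xi) /\
   Cnorm (Shat a b xi) < Re (Shat a b (0, alpha)) /\
   Shat a b (0, alpha) = RtoC (sqrt ((1 - a * alpha ^ 2) / (1 - b * alpha ^ 2))) /\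
   sqrt ((1 - a * alpha ^ 2) / (1 - b * alpha ^ 2)) < c) /\
  (* (3) *)
  Cnorm (Shat a b xi) <
    1 - / 2 * ((b - a) * (k ^ 2 - alpha ^ 2)) / (1 + b * (k ^ 2 - alpha ^ 2)) /\
  (* (4) *)
  Cmul (Cmul Ci xi) (Shat a b xi) =
    Copp (Csqrt (Cmul (Copp (Cmul xi xi))
                      (Cdiv (Cadd (RtoC 1) (Cmul (RtoC a) (Cmul xi xi)))
                            (Cadd (RtoC 1) (Cmul (RtoC b) (Cmul xi xi)))))).
Proof.
  intros k hk xi; subst xi.
  destruct (alpha_c_bound a b c alpha ha hab hc hal0 halc) as [hbal hc2].
  destruct (ratio_bounds a b k alpha ha hab hal0 hbal hk) as (hRe & hIm & hn0 & hnk & harg).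
  rewrite Shat_imag_axis, Shat_eq_ratio, ratio_eq by lra.
  set (r := ratio a b k alpha) in *.
  pose proof (Im_Csqrt_same_side r k hIm) as hkS.
  split; [exact hkS |]. split; [| split].
  - rewrite Cnorm_Csqrt. pose proof (Re_le_Cnorm r). pose proof (Cnorm_nonneg r).
    assert (h0 : 0 <= (1 - a * alpha ^ 2) / (1 - b * alpha ^ 2))
      by (apply Rlt_le, Rdiv_lt_0_compat; nra).
    split; [| split; [| split]].
    + apply sqrt_lt_1; [apply Rlt_le, Rdiv_lt_0_compat | |]; lra.
    + apply sqrt_lt_1; [apply sqrt_pos | |]; lra.
    + reflexivity.
    + apply sqrt_lt_of_lt_sq; lra.
  - replace (1 - / 2 * ((b - a) * (k ^ 2 - alpha ^ 2)) / (1 + b * (k ^ 2 - alpha ^ 2)))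
      with ((1 + (a / b + (1 - a / b) / (1 + b * (k ^ 2 - alpha ^ 2)))) / 2)
      by (field; split; [pose proof (pow2_ge_0 k); nra | lra]).
    apply Cnorm_Csqrt_lt_mean; exact hnk.
  - apply rotated_branch, Re_rot_Csqrt_pos; lra.
Qed.
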